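(* Assume the following hypothesis: for every $\varepsilon>0$ there is a constant $c_\varepsilon>0$ such that for all sufficiently large real $x$, $$\Psi(x+x^{\varepsilon},x^{\varepsilon})-\Psi(x,x^{\varepsilon})\ge c_\varepsilon x^{\varepsilon}.$$ Then for every $\varepsilon>0$ we have $g(n)<n^{\varepsilon}$ for all sufficiently large integers $n$.
   Context: For real $x,y$, $\Psi(x,y)$ denotes the number of positive integers $\le x$ all of whose prime factors are $\le y$. For integers $n>1$ and $k\ge 1$, say that $(n,k)$ has a prime representation if there are distinct primes $P_1,\dots,P_k$ with $P_j\mid (n+j)$ for $1\le j\le k$. Define $g(n)$ to be the largest positive integer $k$ such that $(n,k)$ has a prime representation. *)

From Stdlib Require Import Reals.
From mathcomp Require Import all_boot.

Definition smooth (y : R) (n : nat) : bool :=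
  all (fun p => if Rle_dec (INR p) y then true else false) (primes n).

(* Psi x y = #{ n : 1 <= n <= x, n y-smooth }.  Every positive integer n <= x
   is < up x <= Z.to_nat (up x), so iota 1 (Z.to_nat (up x)) covers them. *)
Definition Psi (x y : R) : nat :=
  count (fun n => (if Rle_dec (INR n) x then true else false) && smooth y n)
        (iota 1 (Z.to_nat (up x))).

Definition prime_rep (n k : nat) : Prop :=
  (1 < n)%N /\ (1 <= k)%N /\
  exists P : nat -> nat,
    (forall j, (1 <= j <= k)%N -> prime (P j) /\ (P j %| n + j)%N) /\
    (forall i j, (1 <= i <= k)%N -> (1 <= j <= k)%N -> P i = P j -> i = j).

From Stdlib Require Import Reals Lra Lia ZArith.
From mathcomp Require Import all_boot zify.
Local Open Scope R_scope.

(* It suffices to show k < n^(2d) for a small d > 0.  Suppose instead that (n,k)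
   has a prime representation with k >= n^(2d), and cut n+1 .. n+mL
   into m blocks of length L ~ (2n)^d.  By the hypothesis each block contains at
   least c n^d integers that are (2n)^d-smooth, so there are at least m c n^d
   such integers in total.  But each of them is divisible by its own prime
   P_j <= (2n)^d, and these primes are distinct, so there are at most
   (2n)^d + 1 = 2^d n^d + 1 of them: a contradiction once m c > 2^d + 1. *)

Lemma INR_up_nat {r} : 0 <= r -> r < INR (Z.to_nat (up r)) <= r + 1.
Proof.
move=> r_ge0; have [up_gt up_le] := archimed r.
have up_ge0 : (0 <= up r)%Z by apply: le_IZR; lra.
rewrite INR_IZR_INZ Z2Nat.id //; lra.
Qed.

Lemma lt_up_nat (p : nat) r : INR p <= r -> (p < Z.to_nat (up r))%N.
Proof.
move=> p_le_r; have [up_gt _] := archimed r.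
have : INR p < IZR (up r) by lra.
by rewrite INR_IZR_INZ => /lt_IZR lt_p; apply/ltP; lia.
Qed.

Lemma exists_nat_ge r : exists N : nat, forall n, (N <= n)%N -> r <= INR n.
Proof.
exists (Z.to_nat (up r)) => n /leP/le_INR le_n.
have [up_gt _] := archimed r.
suff : IZR (up r) <= INR (Z.to_nat (up r)) by lra.
case: (Z.le_gt_cases 0 (up r)) => [up_ge0 | up_lt0].
  by rewrite INR_IZR_INZ Z2Nat.id //; lra.
have := pos_INR (Z.to_nat (up r)); have := IZR_lt _ _ up_lt0; lra.
Qed.

Lemma Rpower_ge1 x e : 1 <= x -> 0 <= e -> 1 <= Rpower x e.
Proof. by move=> x_ge1 e_ge0; rewrite -(Rpower_O x); [apply: Rle_Rpower|lra]. Qed.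

Lemma exists_nat_Rpower_ge d X A : 0 < d ->
  exists N : nat, forall n, (N <= n)%N ->
    [/\ X <= INR n, 1 <= INR n & A <= Rpower (INR n) d].
Proof.
move=> d_gt0; have A1_gt0 : 0 < Rmax A 1 by have := Rmax_r A 1; lra.
set r := Rpower (Rmax A 1) (/ d).
have [N large] := exists_nat_ge (Rmax X (Rmax 1 r)).
exists N => n /large n_large.
have le_n z : z <= Rmax 1 r -> z <= INR n.
  by move=> le_z; apply: Rle_trans n_large; apply: Rle_trans le_z (Rmax_r _ _).
split; [exact: Rle_trans (Rmax_l _ _) n_large | exact/le_n/Rmax_l | ].
apply: Rle_trans (Rmax_l A 1) _.
have -> : Rmax A 1 = Rpower r d.
  by rewrite /r Rpower_mult Rinv_l ?Rpower_1 //; lra.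
by apply: Rle_Rpower_l; [lra | split; [exact: exp_pos | exact/le_n/Rmax_r]].
Qed.

Lemma count_iota_mono (p : pred nat) a {N M} : (N <= M)%N ->
  (count p (iota a N) <= count p (iota a M))%N.
Proof. by move=> le_NM; rewrite -(subnKC le_NM) iotaD count_cat leq_addr. Qed.

Lemma Psi_ge_count (x : nat) y : (count (smooth y) (iota 1 x) <= Psi (INR x) y)%N.
Proof.
rewrite /Psi (@eq_in_count _ _ (fun t => (if Rle_dec (INR t) (INR x) then true
                                          else false) && smooth y t)).
  exact/count_iota_mono/ltnW/lt_up_nat/Rle_refl.
move=> t; rewrite mem_iota => /andP[_ lt_t].
by case: Rle_dec => // -[]; apply: le_INR; apply/leP; lia.
Qed.

Lemma Psi_le_count a y (M : nat) : (forall t, (M < t)%N -> a < INR t) ->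
  (Psi a y <= count (smooth y) (iota 1 M))%N.
Proof.
rewrite /Psi; set N := Z.to_nat _; move=> gt_a.
have drop_le s : (count (fun t => (if Rle_dec (INR t) a then true else false)
                                   && smooth y t) s <= count (smooth y) s)%N.
  by apply: sub_count => t /andP[].
case: (leqP N M) => [le_NM | lt_MN].
  exact: leq_trans (drop_le _) (count_iota_mono _ _ le_NM).
rewrite -(subnKC (ltnW lt_MN)) iotaD count_cat.
rewrite (@eq_in_count _ _ pred0 (iota (1 + M) _)) ?count_pred0 ?addn0 //.
move=> t; rewrite mem_iota => /andP[le_t _].
by case: Rle_dec => // le_ta; have := gt_a t ltac:(lia); lra.
Qed.

Lemma Psi_increment_le_count (x L : nat) y : 0 <= y -> y < INR L ->
  INR (Psi (INR x + y) y) - INR (Psi (INR x) y)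
    <= INR (count (smooth y) (iota x.+1 L)).
Proof.
move=> y_ge0 y_lt_L.
have Psi_x := Psi_ge_count x y.
have Psi_xy : (Psi (INR x + y) y <= count (smooth y) (iota 1 (x + L)))%N.
  apply: Psi_le_count => t lt_t.
  have : INR (x + L + 1) <= INR t by apply: le_INR; apply/leP; lia.
  rewrite !plus_INR /=; lra.
rewrite iotaD count_cat add1n in Psi_xy.
suff : INR (Psi (INR x + y) y)
         <= INR (Psi (INR x) y + count (smooth y) (iota x.+1 L)) by rewrite plus_INR; lra.
by apply: le_INR; apply/leP; lia.
Qed.

Lemma smooth_le_mono y B t : y <= B -> smooth y t -> smooth B t.
Proof.
move=> le_yB; apply: sub_all => p /=.
by case: Rle_dec => // le_py _; case: Rle_dec => // -[]; lra.
Qed.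

Lemma prime_rep_count_smooth n k K B : prime_rep n k -> (K <= k)%N ->
  (count (smooth B) (iota n.+1 K) <= Z.to_nat (up B))%N.
Proof.
move=> [_ [_ [P [P_prime P_inj]]]] le_Kk.
rewrite -size_filter; set s := filter _ _.
have mem_s t : t \in s -> [/\ (n < t)%N, (t <= n + K)%N & smooth B t].
  by rewrite mem_filter mem_iota => /andP[smooth_t /andP[]]; split => //; lia.
have uniq_P : uniq (map (fun t => P (t - n)%N) s).
  rewrite map_inj_in_uniq ?filter_uniq ?iota_uniq //.
  move=> t1 t2 /mem_s[? ? _] /mem_s[? ? _] /P_inj; lia.
rewrite -(size_map (fun t => P (t - n)%N)) -(size_iota 0 (Z.to_nat (up B))).
apply: uniq_leq_size => // _ /mapP[t /mem_s[lt_nt le_t smooth_t] ->].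
have [prime_P dvd_P] := P_prime (t - n)%N ltac:(lia).
rewrite subnKC ?(ltnW lt_nt) // in dvd_P.
have : P (t - n)%N \in primes t by rewrite mem_primes prime_P dvd_P andbT; lia.
move/allP: smooth_t => smooth_t /smooth_t.
case: Rle_dec => // le_PB _.
by rewrite mem_iota add0n lt_up_nat.
Qed.

Lemma count_iota_blocks_ge (p : pred nat) (a : R) (n L m : nat) :
  (forall i, (i < m)%N -> a <= INR (count p (iota (n + i * L).+1 L))) ->
  INR m * a <= INR (count p (iota n.+1 (m * L))).
Proof.
elim: m => [|m IHm] block_ge; first by rewrite /=; lra.
rewrite S_INR mulSnr iotaD count_cat plus_INR addSn.
have := IHm (fun i lt_im => block_ge i (ltnW lt_im)).
have := block_ge m (leqnn _); lra.
Qed.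

Section ShortIntervalHypothesis.

Variables (d c X : R).
Hypotheses (d_gt0 : 0 < d) (d_le_half : 2 * d <= 1) (c_gt0 : 0 < c).
Hypothesis Psi_short_interval : forall x : R, X <= x ->
  INR (Psi (x + Rpower x d) (Rpower x d)) - INR (Psi x (Rpower x d))
    >= c * Rpower x d.

Lemma count_smooth_blocks_ge (n m L : nat) : X <= INR n -> 1 <= INR n ->
  Rpower (2 * INR n) d < INR L -> (m * L <= n)%N ->
  INR m * (c * Rpower (INR n) d)
    <= INR (count (smooth (Rpower (2 * INR n) d)) (iota n.+1 (m * L))).
Proof.
move=> X_le_n n_ge1 B_lt_L le_mLn; apply: count_iota_blocks_ge => i lt_im.
set x := (n + i * L)%N.
have n_le_x : INR n <= INR x by apply: le_INR; apply/leP; lia.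
have x_le_2n : INR x <= 2 * INR n.
  have le_iL : (i * L <= m * L)%N by rewrite leq_mul2r ltnW ?orbT.
  have : INR x <= INR (n + n) by apply: le_INR; apply/leP; lia.
  by rewrite (plus_INR n n); lra.
have le_y_B : Rpower (INR x) d <= Rpower (2 * INR n) d.
  by apply: Rle_Rpower_l; lra.
have le_nd_y : Rpower (INR n) d <= Rpower (INR x) d.
  by apply: Rle_Rpower_l; lra.
have := Psi_short_interval (INR x) ltac:(lra).
have := Psi_increment_le_count x L (Rpower (INR x) d) (Rlt_le _ _ (exp_pos _)) ltac:(lra).
have : (count (smooth (Rpower (INR x) d)) (iota x.+1 L)
          <= count (smooth (Rpower (2 * INR n) d)) (iota x.+1 L))%N.
  by apply: sub_count => t; apply: smooth_le_mono.
move/leP/le_INR; nra.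
Qed.

Let T := Rpower 2 d.
Let m := Z.to_nat (up ((T + 3) / c)).

Lemma prime_rep_lt_of_large n k : X <= INR n -> 1 <= INR n ->
  INR m * T + INR m + 1 <= Rpower (INR n) d ->
  prime_rep n k -> INR k < Rpower (INR n) (2 * d).
Proof.
set nd := Rpower (INR n) d => X_le_n n_ge1 A_le_nd rep_nk.
have T_gt0 : 0 < T := exp_pos _.
have mc_ge : T + 3 <= INR m * c.
  have [m_gt _] : (T + 3) / c < INR m <= (T + 3) / c + 1.
    by apply: INR_up_nat; apply/Rlt_le/Rdiv_lt_0_compat; lra.
  have : (T + 3) / c * c <= INR m * c by apply: Rmult_le_compat_r; lra.
  by rewrite /Rdiv Rmult_assoc Rinv_l ?Rmult_1_r; lra.
have m_ge0 := pos_INR m.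
have nd_ge1 : 1 <= nd by apply: Rpower_ge1; lra.
have nd_sq : nd * nd = Rpower (INR n) (2 * d).
  by rewrite -Rpower_plus; congr Rpower; lra.
have nd_sq_le_n : Rpower (INR n) (2 * d) <= INR n.
  by rewrite -{2}(Rpower_1 (INR n)); [apply: Rle_Rpower|]; lra.
set B := Rpower (2 * INR n) d.
have B_eq : B = T * nd by rewrite /B -Rpower_mult_distr //; lra.
set L := Z.to_nat (up B).
have [B_lt_L L_le] : B < INR L <= B + 1 by apply/INR_up_nat/Rlt_le/exp_pos.
have mL_le : INR (m * L) <= nd * nd.
  rewrite mult_INR; have : INR m * INR L <= INR m * (B + 1) by apply: Rmult_le_compat_l.
  by rewrite B_eq; nra.
apply: Rnot_le_lt => k_ge.
have le_mL_n : (m * L <= n)%N by apply/leP/INR_le; lra.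
have le_mL_k : (m * L <= k)%N by apply/leP/INR_le; lra.
have many := count_smooth_blocks_ge n m L X_le_n n_ge1 B_lt_L le_mL_n.
have /leP/le_INR few := prime_rep_count_smooth _ _ _ B rep_nk le_mL_k.
have : (T + 3) * nd <= INR m * (c * nd).
  by rewrite -Rmult_assoc; apply: Rmult_le_compat_r; lra.
rewrite -/B -/nd in many; rewrite -/L in few; nra.
Qed.

Lemma prime_rep_eventually_lt : exists N : nat, forall n : nat, (N <= n)%N ->
  forall k, prime_rep n k -> INR k < Rpower (INR n) (2 * d).
Proof.
have [N large] := exists_nat_Rpower_ge d X (INR m * T + INR m + 1) d_gt0.
by exists N => n /large[X_le_n n_ge1 A_le_nd] k; apply: prime_rep_lt_of_large.
Qed.

End ShortIntervalHypothesis.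

Theorem theorem1p2 :
  (forall eps : R, (0 < eps) ->
     exists c : R, (0 < c) /\ exists X : R, forall x : R, (X <= x) ->
       (INR (Psi (x + Rpower x eps) (Rpower x eps)) - INR (Psi x (Rpower x eps))
          >= c * Rpower x eps))  ->
  forall eps : R, (0 < eps) ->
    exists N : nat, forall n : nat, (N <= n)%N ->
      forall k : nat, prime_rep n k -> (INR k < Rpower (INR n) eps).
Proof.
move=> hypothesis eps eps_gt0.
set d := Rmin eps 1 / 2.
have d_gt0 : 0 < d by apply: Rdiv_lt_0_compat; [apply: Rmin_glb_lt|]; lra.
have d_le_half : 2 * d <= 1 by have := Rmin_r eps 1; rewrite /d; lra.
have d_le_eps : 2 * d <= eps by have := Rmin_l eps 1; rewrite /d; lra.
have [c [c_gt0 [X Psi_short]]] := hypothesis d d_gt0.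
have [N lt_2d] := prime_rep_eventually_lt _ _ _ d_gt0 d_le_half c_gt0 Psi_short.
exists N => n le_Nn k rep_nk.
have [n_gt1 _] := rep_nk.
apply: Rlt_le_trans (lt_2d n le_Nn k rep_nk) _.
by apply: Rle_Rpower => //; apply: (le_INR 1); apply/leP; lia.
Qed.
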